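(* Consider the errorless symmetric relay network described in the context, with a fixed time horizon $T\ge 1$. A policy $\pi^*$ is optimal, i.e. it minimizes $\frac{1}{TK}\sum_{t=1}^T\sum_{k=1}^K h_k^{\pi}(t)$ over all policies $\pi$, if and only if $\pi^*$ satisfies both \[ \sum_{t=1}^{T}\sum_{\tau=1}^{t-2} R(\mathcal{S}^{\pi^*}(\tau)) = \max_{\pi}\sum_{t=1}^{T}\sum_{\tau=1}^{t-2} R(\mathcal{S}^{\pi}(\tau)) \] and \[ \sum_{\tau=1}^{t-1} R(\mathcal{S}^{\pi^*}(\tau)) = \sum_{\tau=1}^{t} R(\mathcal{U}^{\pi^*}(\tau)) \quad\text{for all time slots } t . \]
   Context: Fix integers $K\ge 2$ and $S,U$ with $1\le S<K$, $1\le U<K$, and $S=U$. There are $K$ processes indexed by $k\in\{1,\dots,K\}$ (sensor $k$ feeds destination $k$ through a single relay), and time slots $t=1,2,\dots$. The state at time $t$ consists of the relay AoI values $g_k(t)$ and the destination AoI values $h_k(t)$, with initial values $g_k(1)=h_k(1)=1$ for all $k$. A policy $\pi$ is a map assigning to the current state $(\{g_k(t)\}_k,\{h_k(t)\}_k)$ a pair $(\mathcal{S}^{\pi}(t),\mathcal{U}^{\pi}(t))$ of subsets of $\{1,\dots,K\}$ with $|\mathcal{S}^{\pi}(t)|=S$ (sensors sampled) and $|\mathcal{U}^{\pi}(t)|=U$ (destinations updated). Errorless dynamics: $g_k(t+1)=1$ if $k\in\mathcal{S}(t)$ and $g_k(t+1)=g_k(t)+1$ otherwise; $h_k(t+1)=g_k(t)+1$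 if $k\in\mathcal{U}(t)$ and $h_k(t+1)=h_k(t)+1$ otherwise. Write $g_k^\pi(t),h_k^\pi(t)$ for the resulting sequences under $\pi$. Define the reductions $R(\mathcal{S}^{\pi}(\tau))=\sum_{k\in\mathcal{S}^{\pi}(\tau)} g_k^{\pi}(\tau)$ and $R(\mathcal{U}^{\pi}(\tau))=\sum_{k\in\mathcal{U}^{\pi}(\tau)}\big(h_k^{\pi}(\tau)-g_k^{\pi}(\tau)\big)$; empty sums are $0$. *)

From mathcomp Require Import all_boot all_order all_algebra.
Set Implicit Arguments. Unset Strict Implicit. Unset Printing Implicit Defensive.
Import Order.TTheory GRing.Theory Num.Theory.

(* Processes k = 1..K are represented by 'I_K (i.e. 0..K-1). *)
(* A state is the pair (relay AoI g, destination AoI h). *)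
Definition state (K : nat) := (('I_K -> nat) * ('I_K -> nat))%type.

Record policy (K S U : nat) := Policy {
  pol :> state K -> {set 'I_K} * {set 'I_K};
  pol_cardS : forall x, #|(pol x).1| = S;
  pol_cardU : forall x, #|(pol x).2| = U
}.

Section Dyn.
Variables (K S U : nat) (pi : policy K S U).

Definition step (x : state K) : state K :=
  let d := pi x in
  (fun k => if k \in d.1 then 1 else x.1 k + 1,
   fun k => if k \in d.2 then x.1 k + 1 else x.2 k + 1)%N.

(* traj n = state at time slot n+1; initial g_k(1) = h_k(1) = 1 *)
Fixpoint traj (n : nat) : state K :=
  match n with
  | 0 => (fun _ => 1%N, fun _ => 1%N)
  | n'.+1 => step (traj n')
  end.

Definition gA (t : nat) (k : 'I_K) : nat := (traj t.-1).1 k.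
Definition hA (t : nat) (k : 'I_K) : nat := (traj t.-1).2 k.
Definition Sset (t : nat) : {set 'I_K} := (pi (traj t.-1)).1.
Definition Uset (t : nat) : {set 'I_K} := (pi (traj t.-1)).2.

Definition RS (tau : nat) : int := (\sum_(k in Sset tau) (gA tau k)%:Z)%R.
Definition RU (tau : nat) : int :=
  (\sum_(k in Uset tau) ((hA tau k)%:Z - (gA tau k)%:Z))%R.

Definition avg_aoi (T : nat) : rat :=
  ((\sum_(1 <= t < T.+1) \sum_(k < K) hA t k)%:R / (T * K)%:R)%R.

Definition Jsample (T : nat) : int :=
  (\sum_(1 <= t < T.+1) \sum_(1 <= tau < t.-1) RS tau)%R.
End Dyn.

From mathcomp Require Import all_boot all_order all_algebra zify.
Import Order.TTheory GRing.Theory Num.Theory.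
Set Implicit Arguments. Unset Strict Implicit. Unset Printing Implicit Defensive.

(* Let A(m) and B(m) be the total sampling and update reductions over the
   first m slots. Each slot ages every relay and destination by one, so
   sum_k g_k = (m+1)K - A(m) and sum_k h_k = (m+1)K - B(m) after m slots.
   An update of k gains at most h_k - g_k, whence B(m+1) <= A(m): minimising
   the average AoI means maximising sum_t B(t), which is bounded by
   J = sum_t A(t-1). The greedy policy samples the S oldest relays and
   updates the destinations of the S freshly sampled ones (here S = U is
   used); it attains B(m+1) = A(m), and it maximises every A(m) because it
   maximises, for each j, the number of relays of age at most j, and
   sum_k g_k is determined by these numbers. Hence pi* is optimal iff
   sum_t B*(t) reaches J_greedy, i.e. iff J* is maximal and B*(t) = A*(t-1)
   for every t. *)

Lemma sum_ord_ltn m N : m <= N -> \sum_(j < N) (j < m) = m.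
Proof.
move=> leMN; rewrite -(big_mkord xpredT (fun j => nat_of_bool (j < m))) -big_mkcond /=.
by rewrite -(big_nat_widen _ _ _ xpredT) // sum_nat_const_nat subn0 muln1.
Qed.

Lemma sum1_ord n : \sum_(k < n) 1 = n.
Proof. by rewrite sum1_card card_ord. Qed.

Section Accounting.
Variables (K S U : nat) (pi : policy K S U).
Local Notation tr := (traj pi).

Definition relay_total n := \sum_(k < K) (tr n).1 k.
Definition dest_total n := \sum_(k < K) (tr n).2 k.
Definition sample_gain n := \sum_(k in (pi (tr n)).1) (tr n).1 k.
Definition update_gain n := \sum_(k in (pi (tr n)).2) ((tr n).2 k - (tr n).1 k).
Definition sample_gain_sum m := \sum_(n < m) sample_gain n.
Definition update_gain_sum m := \sum_(n < m) update_gain n.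

Lemma sample_gain_sumS m : sample_gain_sum m.+1 = sample_gain_sum m + sample_gain m.
Proof. by rewrite /sample_gain_sum big_ord_recr. Qed.

Lemma update_gain_sumS m : update_gain_sum m.+1 = update_gain_sum m + update_gain m.
Proof. by rewrite /update_gain_sum big_ord_recr. Qed.

Lemma traj_age_bounds n k :
  [/\ 1 <= (tr n).1 k, (tr n).1 k <= n.+1 & (tr n).1 k <= (tr n).2 k].
Proof.
elim: n k => [|n IH] k //=; rewrite /step /=; case: (IH k) => g_ge1 g_le g_le_h.
by case: ifP => _; case: ifP => _; split; lia.
Qed.

Lemma relay_total_step n : relay_total n.+1 + sample_gain n = relay_total n + K.
Proof.
rewrite /relay_total /sample_gain /= /step /= [X in _ + X = _]big_mkcond /=.
rewrite -[X in _ = _ + X]sum1_ord -!big_split /=.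
by apply: eq_bigr => k _; case: ifP => _; lia.
Qed.

Lemma dest_total_step n : dest_total n.+1 + update_gain n = dest_total n + K.
Proof.
rewrite /dest_total /update_gain /= /step /= [X in _ + X = _]big_mkcond /=.
rewrite -[X in _ = _ + X]sum1_ord -!big_split /=.
by apply: eq_bigr => k _; case: (traj_age_bounds n k) => _ _ ?; case: ifP => _; lia.
Qed.

Lemma update_gain_le n : update_gain n + relay_total n <= dest_total n.
Proof.
rewrite /update_gain /relay_total /dest_total [X in X + _]big_mkcond /= -big_split /=.
by apply: leq_sum => k _; case: (traj_age_bounds n k) => _ _ ?; case: ifP => _; lia.
Qed.

Lemma relay_total_gainE m : relay_total m + sample_gain_sum m = m.+1 * K.
Proof.
elim: m => [|m IH].
  by rewrite /sample_gain_sum big_ord0 addn0 mul1n /relay_total /= sum1_ord.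
by rewrite sample_gain_sumS; have := relay_total_step m; lia.
Qed.

Lemma dest_total_gainE m : dest_total m + update_gain_sum m = m.+1 * K.
Proof.
elim: m => [|m IH].
  by rewrite /update_gain_sum big_ord0 addn0 mul1n /dest_total /= sum1_ord.
by rewrite update_gain_sumS; have := dest_total_step m; lia.
Qed.

Lemma update_gain_sum_le m : update_gain_sum m <= sample_gain_sum m.-1.
Proof.
case: m => [|m] /=; first by rewrite /update_gain_sum big_ord0.
rewrite update_gain_sumS.
have := update_gain_le m; have := relay_total_gainE m; have := dest_total_gainE m; lia.
Qed.

Definition n_age_le (x : state K) j := #|[set k | x.1 k <= j]|.

Lemma n_age_le0 n : n_age_le (tr n) 0 = 0.
Proof.
apply/eqP; rewrite cards_eq0; apply/eqP/setP => k; rewrite !inE leqn0.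
by case: (traj_age_bounds n k) => ? _ _; apply/negbTE; lia.
Qed.

Lemma n_age_le_step n j : n_age_le (tr n.+1) j.+1 <= minn (n_age_le (tr n) j + S) K.
Proof.
rewrite leq_min [X in _ && X](leq_trans (max_card _)) ?card_ord // andbT /n_age_le /= /step /=.
rewrite -[X in _ <= _ + X](pol_cardS pi (tr n)) addnC; apply: leq_trans (leq_card_setU _ _).
apply: subset_leq_card; apply/subsetP => k; rewrite !inE.
by case: ifP => // _; rewrite addn1 ltnS => ->; rewrite orbT.
Qed.

Lemma relay_total_layers n : relay_total n = \sum_(j < n.+1) (K - n_age_le (tr n) j).
Proof.
transitivity (\sum_(k < K) \sum_(j < n.+1) (j < (tr n).1 k)).
  by apply: eq_bigr => k _; rewrite sum_ord_ltn //; case: (traj_age_bounds n k).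
rewrite exchange_big /=; apply: eq_bigr => j _.
have := cardsC [set k | (tr n).1 k <= j]; rewrite card_ord => split_K.
rewrite /n_age_le -[X in _ = X - _]split_K addKn.
by rewrite -sum1_card [RHS]big_mkcond /=; apply: eq_bigr => k _; rewrite !inE -ltnNge.
Qed.

Definition sample_score T := \sum_(t < T) sample_gain_sum t.-1.
Definition update_score T := \sum_(t < T) update_gain_sum t.

Lemma update_score_leif T :
  update_score T <= sample_score T
    ?= iff [forall t : 'I_T, update_gain_sum t == sample_gain_sum t.-1].
Proof. by apply: leqif_sum => t _; apply/leqif_eq/update_gain_sum_le. Qed.

Lemma sum_RS t : (\sum_(1 <= tau < t) RS pi tau)%R = Posz (sample_gain_sum t.-1).
Proof.
rewrite big_add1 big_mkord -natz natr_sum; apply: eq_bigr => n _.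
by rewrite /RS natr_sum; apply: eq_bigr => k _; rewrite natz.
Qed.

Lemma sum_RU t : (\sum_(1 <= tau < t) RU pi tau)%R = Posz (update_gain_sum t.-1).
Proof.
rewrite big_add1 big_mkord -natz natr_sum; apply: eq_bigr => n _.
rewrite /RU natr_sum; apply: eq_bigr => k _; rewrite natz.
by rewrite subzn //; case: (traj_age_bounds n k).
Qed.

Lemma Jsample_score T : Jsample pi T = Posz (sample_score T).
Proof.
rewrite /Jsample big_add1 big_mkord -natz natr_sum.
by apply: eq_bigr => t _; rewrite sum_RS natz.
Qed.

Lemma avg_aoiE T :
  avg_aoi pi T = ((\sum_(t < T) dest_total t)%:R / (T * K)%:R)%R.
Proof. by rewrite /avg_aoi big_add1 big_mkord. Qed.

Lemma reduction_balanceP T :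
  (forall t, 1 <= t <= T.-1 ->
     (\sum_(1 <= tau < t) RS pi tau)%R = (\sum_(1 <= tau < t.+1) RU pi tau)%R)
  <-> update_score T = sample_score T.
Proof.
rewrite (rwP eqP) (update_score_leif T).2; split => [balanced | /forallP balanced t].
  apply/forallP => -[[|t] ltT]; first by rewrite /update_gain_sum /sample_gain_sum !big_ord0.
  have t_in : 0 < t.+1 <= T.-1 by lia.
  by have := balanced t.+1 t_in; rewrite sum_RS sum_RU => -[->].
move=> /andP [t_ge1 t_le]; have ltT : t < T by lia.
by rewrite sum_RS sum_RU; have /eqP -> := balanced (Ordinal ltT).
Qed.

End Accounting.

Lemma avg_aoi_le K S U (p q : policy K S U) T : 0 < T -> 0 < K ->
  (avg_aoi p T <= avg_aoi q T)%R = (update_score q T <= update_score p T).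
Proof.
move=> T_gt0 K_gt0; rewrite !avg_aoiE ler_pM2r ?invr_gt0 ?ltr0n ?muln_gt0 ?T_gt0 //.
have dest_scoreE (r : policy K S U) :
    \sum_(t < T) dest_total r t + update_score r T = \sum_(t < T) t.+1 * K.
  by rewrite -big_split; apply: eq_bigr => t _; apply: dest_total_gainE.
by rewrite ler_nat; have := dest_scoreE p; have := dest_scoreE q; lia.
Qed.

Section Greedy.
Variables (K S : nat) (leSK : S <= K).

Definition greedy_set (g : 'I_K -> nat) : {set 'I_K} :=
  [set k in take S (sort (fun a b => g b <= g a) (enum 'I_K))].

Lemma card_greedy_set g : #|greedy_set g| = S.
Proof.
rewrite cardsE (card_uniqP _); last by rewrite take_uniq ?sort_uniq ?enum_uniq.
by rewrite size_take size_sort size_enum_ord; case: ltnP; lia.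
Qed.

Lemma greedy_set_max g a b : a \in greedy_set g -> b \notin greedy_set g -> g b <= g a.
Proof.
rewrite /greedy_set !inE; set s := sort _ _ => a_in b_out.
have sorted_s : sorted (fun a b => g b <= g a) s.
  by apply: sort_sorted => x y; apply: leq_total.
have b_in : b \in drop S s.
  have : b \in take S s ++ drop S s by rewrite cat_take_drop /s mem_sort mem_enum.
  by rewrite mem_cat (negbTE b_out).
move: sorted_s; rewrite -(cat_take_drop S s) sorted_pairwise; last first.
  by move=> x y z /=; lia.
by rewrite pairwise_cat => /and3P [/allrelP ordered _ _]; apply: ordered.
Qed.

Definition fresh (x : state K) := [set k | x.1 k == 1].

Definition greedy_choice (x : state K) : {set 'I_K} * {set 'I_K} :=
  (greedy_set x.1, if #|fresh x| == S then fresh x else greedy_set x.1).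

Lemma greedy_choice_cardS x : #|(greedy_choice x).1| = S.
Proof. exact: card_greedy_set. Qed.

Lemma greedy_choice_cardU x : #|(greedy_choice x).2| = S.
Proof. by rewrite /=; case: eqP => // _; apply: card_greedy_set. Qed.

Definition greedy_policy : policy K S S :=
  Policy greedy_choice_cardS greedy_choice_cardU.

Local Notation gp := greedy_policy.

Lemma n_age_le_greedy_step n j :
  minn (n_age_le (traj gp n) j + S) K <= n_age_le (traj gp n.+1) j.+1.
Proof.
rewrite /n_age_le /= /step /=; set g := (traj gp n).1.
have [[b /andP [b_out lt_j_b]] | all_young] :=
  altP (@existsP _ (fun b => (b \notin greedy_set g) && (j < g b))).
  have disj : [disjoint greedy_set g & [set k | g k <= j]].
    apply/pred0P => k /=; apply/negbTE/andP => -[k_in]; rewrite inE.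
    by have := greedy_set_max k_in b_out; lia.
  apply: leq_trans (geq_minl _ _) _.
  have /eqP <- : #|greedy_set g :|: [set k | g k <= j]| == #|[set k | g k <= j]| + S.
    by rewrite addnC -[X in _ == X + _](card_greedy_set g) (leq_card_setU _ _).2.
  apply: subset_leq_card; apply/subsetP => k; rewrite !inE.
  by case: ifP => // _ /=; lia.
apply: leq_trans (geq_minr _ _) _; rewrite -[K in K <= _]card_ord -cardsT subset_leq_card //.
apply/subsetP => k _; rewrite inE; case: ifP => // k_out.
by move: all_young; rewrite negb_exists => /forallP /(_ k); rewrite k_out /=; lia.
Qed.

Lemma n_age_le_greedy_max U (pi : policy K S U) n j :
  n_age_le (traj pi n) j <= n_age_le (traj gp n) j.
Proof.
elim: n j => [|n IH] [|j] //; first by rewrite n_age_le0.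
apply: leq_trans (n_age_le_step pi n j) _; apply: leq_trans (n_age_le_greedy_step n j).
by have := IH j; lia.
Qed.

Lemma sample_gain_sum_greedy_max U (pi : policy K S U) m :
  sample_gain_sum pi m <= sample_gain_sum gp m.
Proof.
have relay_min : relay_total gp m <= relay_total pi m.
  rewrite !relay_total_layers; apply: leq_sum => j _.
  exact/leq_sub2l/n_age_le_greedy_max.
by have := relay_total_gainE pi m; have := relay_total_gainE gp m; lia.
Qed.

Lemma sample_score_greedy_max U (pi : policy K S U) T :
  sample_score pi T <= sample_score gp T.
Proof. by apply: leq_sum => t _; apply: sample_gain_sum_greedy_max. Qed.

Definition greedy_inv (x : state K) :=
  (forall k, k \notin fresh x -> x.2 k = x.1 k) /\
  (#|fresh x| != S -> forall k, x.2 k = x.1 k).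

Lemma greedy_inv_unupdated x k :
  greedy_inv x -> k \notin (greedy_choice x).2 -> x.2 k = x.1 k.
Proof. by move=> [lag_fresh lag_none] /=; case: eqP => [_ /lag_fresh | /eqP /lag_none]. Qed.

Lemma greedy_inv_traj n : greedy_inv (traj gp n).
Proof.
elim: n => [|n IH]; first by split.
rewrite /=; set x := traj gp n.
have fresh_next : fresh (step gp x) = greedy_set x.1.
  apply/setP => k; rewrite inE /step /=; case: ifP => // _.
  by apply/negbTE/eqP; case: (traj_age_bounds gp n k); rewrite -/x; lia.
split; last by rewrite fresh_next card_greedy_set eqxx.
move=> k; rewrite fresh_next /step /= => /negbTE ->.
by case: ifP => // k_out; rewrite (greedy_inv_unupdated IH) ?k_out.
Qed.

Lemma greedy_update_gain n : update_gain gp n + relay_total gp n = dest_total gp n.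
Proof.
rewrite /update_gain /relay_total /dest_total [X in X + _]big_mkcond /= -big_split /=.
apply: eq_bigr => k _; case: (traj_age_bounds gp n k) => _ _ ?; case: ifP => k_in; first lia.
by rewrite (greedy_inv_unupdated (greedy_inv_traj n)) ?k_in.
Qed.

Lemma greedy_update_score T : update_score gp T = sample_score gp T.
Proof.
apply: eq_bigr => -[[|m] _] _ /=; first by rewrite /update_gain_sum /sample_gain_sum !big_ord0.
rewrite update_gain_sumS; have := greedy_update_gain m.
by have := relay_total_gainE gp m; have := dest_total_gainE gp m; lia.
Qed.

End Greedy.

Theorem theorem1 (K S U T : nat)
  (hK : (2 <= K)%N) (hS1 : (1 <= S)%N) (hSK : (S < K)%N)
  (hU1 : (1 <= U)%N) (hUK : (U < K)%N) (hSU : S = U) (hT : (1 <= T)%N)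
  (pistar : policy K S U) :
  (forall pi : policy K S U, (avg_aoi pistar T <= avg_aoi pi T)%R) <->
  ((forall pi : policy K S U, (Jsample pi T <= Jsample pistar T)%R) /\
   (forall t : nat, (1 <= t <= T.-1)%N ->
      (\sum_(1 <= tau < t) RS pistar tau)%R = (\sum_(1 <= tau < t.+1) RU pistar tau)%R)).
Proof.
subst U; have leSK : S <= K := ltnW hSK.
have avg_le (p q : policy K S S) := avg_aoi_le p q hT (ltnW hK).
have score_le (p : policy K S S) := leq_of_leqif (update_score_leif p T).
have J_max (p : policy K S S) := sample_score_greedy_max leSK p T.
have greedy_balanced := greedy_update_score leSK T.
rewrite reduction_balanceP; split => [optimal | [J_opt balanced] pi].
  have := optimal (greedy_policy leSK); rewrite avg_le => greedy_le.
  have := score_le pistar; have := J_max pistar.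
  split=> [pi|]; last lia.
  by rewrite !Jsample_score lez_nat; have := J_max pi; lia.
rewrite avg_le; have := J_opt pi; rewrite !Jsample_score lez_nat.
by have := score_le pi; lia.
Qed.
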